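(* Let $n\ge 8$ and let $\widetilde\Delta_n$ be the connected component of $\widetilde P_0(S_n)$ containing $[(1\,2)]$. Then every vertex $[\psi]$ of $\widetilde P_0(S_n)$ lies in $\widetilde\Delta_n$, except possibly those for which $o(\psi)$ is a prime $p$ with $p\ge n-1$.
   Context: $\widetilde P_0(S_n)$: vertex set $\{[x]:x\in S_n\setminus\{\mathrm{id}\}\}$ with $[x]=\{y:\langle y\rangle=\langle x\rangle\}$, distinct $[x],[y]$ adjacent iff some representatives are one a positive power of the other. *)

From HB Require Import structures.
From mathcomp Require Import all_boot all_order all_fingroup.
From Stdlib Require Import Relation_Operators.
Set Implicit Arguments. Unset Strict Implicit. Unset Printing Implicit Defensive.
Local Open Scope group_scope.

Definition qclass (gT : finGroupType) (x : gT) : {set gT} :=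
  [set y | <[y]> == <[x]>].

Definition qvertex (gT : finGroupType) (C : {set gT}) : Prop :=
  exists x : gT, x != 1 /\ C = qclass x.

Definition qadj (gT : finGroupType) (C D : {set gT}) : Prop :=
  [/\ qvertex C, qvertex D, C <> D &
   exists x y : gT, [/\ x \in C, y \in D &
     exists k : nat, (0 < k)%N /\ (x = y ^+ k \/ y = x ^+ k)]].

Definition qconnected (gT : finGroupType) (C D : {set gT}) : Prop :=
  clos_refl_trans _ (@qadj gT) C D.

From HB Require Import structures.
From mathcomp Require Import all_boot all_order all_fingroup.
From mathcomp Require Import all_solvable zify.
From Stdlib Require Import Relation_Operators.
Set Implicit Arguments. Unset Strict Implicit. Unset Printing Implicit Defensive.
Local Open Scope group_scope.

(* Let q be a prime divisor of o(psi); the power u of psi of order q is adjacent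
   to psi.  Commuting nontrivial elements of coprime orders are connected, both
   being powers of their product.  So if q <= n - 2, u is linked to a
   transposition through commuting elements of coprime orders built from its
   fixed points (a transposition or a 3-cycle on them) or from its q-cycles (an
   involution swapping two of them, an element of order 3 rotating three
   2-cycles).  If q >= n - 1, u is a q-cycle, whose centraliser in S_n is <[u]>,
   so psi is a power of u and o(psi) = q. *)

Section QuotientPowerGraph.

Variable gT : finGroupType.
Implicit Types x y z : gT.

Definition qconn x y := qconnected (qclass x) (qclass y).

Lemma qadj_sym (C D : {set gT}) : qadj C D -> qadj D C.
Proof.
case=> vC vD CD [x [y [xC yD [k [k_gt0 xy]]]]]; split=> //; first by move/esym.
by exists y, x; split=> //; exists k; split=> //; case: xy; [right | left].
Qed.

Lemma qconn_sym x y : qconn x y -> qconn y x.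
Proof.
rewrite /qconn /qconnected.
elim=> [C D CD | C | C D E _ CD _ DE].
- exact/rt_step/qadj_sym.
- exact: rt_refl.
- exact: rt_trans DE CD.
Qed.

Lemma qconn_trans y x z : qconn x y -> qconn y z -> qconn x z.
Proof. exact: rt_trans. Qed.

Lemma qconn_expg x k : x ^+ k != 1 -> qconn x (x ^+ k).
Proof.
move=> xk1; rewrite /qconn.
have [-> | neq] := eqVneq (qclass x) (qclass (x ^+ k)); first exact: rt_refl.
have x1 : x != 1 by apply: contraNneq xk1 => ->; rewrite expg1n.
apply: rt_step; split; [by exists x | by exists (x ^+ k) | exact/eqP |].
exists x, (x ^+ k); split; rewrite ?inE //; exists k; split; last by right.
by case: k xk1 {neq} => //; rewrite expg0 eqxx.
Qed.

Lemma qconn_common_power x y k l : x ^+ k = y ^+ l -> x ^+ k != 1 -> qconn x y.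
Proof.
move=> xy xk1; apply: qconn_trans (qconn_expg xk1) _.
by rewrite xy in xk1 *; apply/qconn_sym/qconn_expg.
Qed.

Lemma qconn_coprime x z :
  commute x z -> coprime #[x] #[z] -> x != 1 -> z != 1 -> qconn x z.
Proof.
move=> cxz co x1 z1.
have nt_power y w : coprime #[y] #[w] -> y != 1 -> y ^+ #[w] != 1.
  move=> co_yw y1; apply: contra y1; rewrite -order_dvdn -order_eq1 => yw.
  by move: co_yw; rewrite coprime_sym => /(coprime_dvdl yw); rewrite /coprime gcdnn.
apply: (@qconn_trans (x * z)).
  apply: (@qconn_common_power _ _ #[z] #[z]); last exact: nt_power.
  by rewrite expgMn // expg_order mulg1.
apply: qconn_sym; apply: (@qconn_common_power _ _ #[x] #[x]).
  by rewrite expgMn // expg_order mul1g.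
by apply: nt_power; rewrite // coprime_sym.
Qed.

End QuotientPowerGraph.

Section Permutations.

Variable T : finType.
Implicit Types (x y : {perm T}) (A : {set T}) (i j : T).

Lemma exists_notin A : #|A| < #|T| -> exists i, i \notin A.
Proof.
move=> A_lt; have /card_gt0P[i] : 0 < #|~: A| by rewrite cardsCs setCK; lia.
by exists i; rewrite -in_setC.
Qed.

Lemma perm_on_moved x : perm_on [set i | x i != i] x.
Proof. by apply/subsetP=> i; rewrite inE. Qed.

Lemma order_tperm i j : i != j -> #[tperm i j] = 2.
Proof.
move=> ij; apply: nt_prime_order => //; first by rewrite expgS expg1 tperm2.
by apply/eqP=> t1; move: ij; have := tpermL i j; rewrite t1 perm1 => ->; rewrite eqxx.
Qed.

Definition perm_cycle3 i j k : {perm T} := tperm i j * tperm j k.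

Lemma perm_on_cycle3 i j k : perm_on [set i; j; k] (perm_cycle3 i j k).
Proof.
apply: perm_onM; apply: subset_trans (tperm_on _ _) _; apply/subsetP=> l;
  by rewrite !inE => /orP[] ->; rewrite ?orbT.
Qed.

Lemma order_cycle3 i j k : i != j -> j != k -> k != i -> #[perm_cycle3 i j k] = 3.
Proof.
move=> ij jk ki; set c := perm_cycle3 i j k.
have ci : c i = k by rewrite permM tpermL tpermL.
have cj : c j = i by rewrite permM tpermR tpermD // eq_sym.
have ck : c k = j by rewrite permM (tpermD (x := i)) ?tpermR // eq_sym.
apply: nt_prime_order => //; last first.
  by apply/eqP=> c1; move: ki; rewrite -ci c1 perm1 eqxx.
apply/permP=> l; rewrite permX perm1 /=.
have [-> | li] := eqVneq l i; first by rewrite ci ck cj.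
have [-> | lj] := eqVneq l j; first by rewrite cj ci ck.
have [-> | lk] := eqVneq l k; first by rewrite ck cj ci.
by rewrite !(out_perm (perm_on_cycle3 i j k)) //
  !inE (negbTE li) (negbTE lj) (negbTE lk).
Qed.

Lemma qconn_tperm i j k l :
  7 <= #|T| -> i != j -> k != l -> qconn (tperm i j) (tperm k l).
Proof.
move=> T7 ij kl; set A := [set i; j; k; l].
have /card_gt2P[e [f [g [[eA fA gA] [ef fg ge]]]]] : 2 < #|~: A|.
  by have := cardsC A; rewrite !cardsU !cards1; lia.
rewrite !inE in eA fA gA.
set c := perm_cycle3 e f g; have oc : #[c] = 3 := order_cycle3 ef fg ge.
have qconn_c u v : u \in A -> v \in A -> u != v -> qconn (tperm u v) c.
  rewrite !inE => uA vA uv.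
  apply: qconn_coprime; rewrite -?order_gt1 ?order_tperm ?oc //.
  apply: (@perm_onC _ A [set e; f; g]); last 1 first.
  - rewrite disjoint_sym disjoints_subset.
    by apply/subsetP=> m /[!inE] /orP[/orP[]|] /eqP->.
  - by apply: subset_trans (tperm_on u v) _; apply/subsetP=> m /[!inE] /orP[]/eqP->.
  - exact: perm_on_cycle3.
apply: qconn_trans (qconn_c _ _ _ _ ij) (qconn_sym (qconn_c _ _ _ _ kl));
  by rewrite !inE ?eqxx ?orbT.
Qed.

Lemma qconn_tperm_small_support A y i j :
  7 <= #|T| -> i != j -> y != 1 -> odd #[y] -> perm_on A y -> #|A| + 2 <= #|T| ->
  qconn y (tperm i j).
Proof.
move=> T7 ij y1 odd_y yA A_small.
have /card_gt1P[e [f [eA fA ef]]] : 1 < #|~: A| by have := cardsC A; lia.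
rewrite !inE in eA fA.
apply: (@qconn_trans _ (tperm e f)); last exact: qconn_tperm.
apply: qconn_coprime => //; rewrite -?order_gt1 ?order_tperm ?coprimen2 //.
apply: perm_onC yA (tperm_on e f) _.
by rewrite disjoint_sym disjoints_subset; apply/subsetP=> m /[!inE] /orP[]/eqP->.
Qed.

End Permutations.

Section PermutationOrbits.

Variable T : finType.
Implicit Types (x y s t : {perm T}) (a b c z : T).

Lemma porbit_cycleP x a z :
  reflect (exists2 g, g \in <[x]> & z = g a) (z \in porbit x a).
Proof. by rewrite porbit.unlock; apply: (iffP imsetP). Qed.

Lemma mem_porbit_perm x a z : (x z \in porbit x a) = (z \in porbit x a).
Proof. by rewrite -!eq_porbit_mem -[x z]/((x ^+ 1) z) porbit_perm. Qed.

Lemma commute_fix_porbit x y a z :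
  commute x y -> y a = a -> z \in porbit x a -> y z = z.
Proof.
move=> cxy ya /porbitP[i ->].
have cxiy : commute (x ^+ i) y by apply/commute_sym/commuteX/commute_sym.
by rewrite -permM cxiy permM ya.
Qed.

Lemma perm_eq1_commute_porbits x y :
    commute x y -> (forall z, y z != z -> exists2 c, y c = c & z \in porbit x c) ->
  y = 1.
Proof.
move=> cxy fix_orbits; apply/permP=> z; rewrite perm1; apply/eqP.
apply: contraT => /[dup] yz /fix_orbits[c yc zc].
by rewrite (commute_fix_porbit cxy yc zc) eqxx in yz.
Qed.

Definition swaps_porbits x a b s :=
  [/\ commute x s, s a = b, s b = a & perm_on (porbit x a :|: porbit x b) s].

Section PrimeOrder.

Variable x : {perm T}.
Hypothesis x_prime : prime #[x].

Lemma cycle_prime_stab a g : x a != a -> g \in <[x]> -> g a = a -> g = 1.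
Proof.
move=> xa gx ga; apply: contraNeq xa => g1.
have defx : <[x]> :=: <[g]> by apply: nt_gen_prime; rewrite // !inE g1.
have /cycleP[i ->] : x \in <[g]> by rewrite -defx cycle_id.
by rewrite permX_fix.
Qed.

Lemma card_porbit_prime a : x a != a -> #|porbit x a| = #[x].
Proof.
move=> xa; apply/(prime_nt_dvdP x_prime); last by rewrite porbitE dvdn_orbit.
rewrite neq_ltn; apply/orP; right; apply/card_gt1P; exists a, (x a).
by rewrite porbit_id eq_sym xa -[x a]/((x ^+ 1) a) mem_porbit.
Qed.

Lemma swaps_porbits_exists a b :
  x a != a -> x b != b -> b \notin porbit x a -> exists s, swaps_porbits x a b s.
Proof.
move=> xa xb bNa.
have cycle_inj c : x c != c -> {in <[x]> &, injective (fun g : {perm T} => g c)}.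
  move=> xc g h gx hx gh; apply/eqP; rewrite eq_mulgV1; apply/eqP.
  by apply: (cycle_prime_stab xc); rewrite ?groupM ?groupV // permM gh permK.
(* The orbits of a and b are regular <[x]>-orbits, so g a |-> g b is well defined. *)
pose f z := if [pick g in <[x]> | g a == z] is Some g then g b
            else if [pick g in <[x]> | g b == z] is Some g then g a else z.
have fa g : g \in <[x]> -> f (g a) = g b.
  rewrite /f => gx; case: pickP => [h /andP[hx /eqP ha] | /(_ g)].
    by rewrite (cycle_inj a xa h g hx gx ha).
  by rewrite gx eqxx.
have fb g : g \in <[x]> -> f (g b) = g a.
  rewrite /f => gx; case: pickP => [h /andP[hx /eqP hab] | _].
    case/negP: bNa; apply/porbit_cycleP; exists (h * g^-1); rewrite ?groupM ?groupV //.
    by rewrite permM hab permK.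
  case: pickP => [h /andP[hx /eqP hb] | /(_ g)].
    by rewrite (cycle_inj b xb h g hx gx hb).
  by rewrite gx eqxx.
have f_out z : z \notin porbit x a -> z \notin porbit x b -> f z = z.
  rewrite /f => zNa zNb; case: pickP => [h /andP[hx /eqP hz] | _].
    by case/negP: zNa; apply/porbit_cycleP; exists h; rewrite ?hz.
  case: pickP => [h /andP[hx /eqP hz] | _] //.
  by case/negP: zNb; apply/porbit_cycleP; exists h; rewrite ?hz.
have f_inv : involutive f.
  move=> z; have [/porbit_cycleP[g gx ->] | zNa] := boolP (z \in porbit x a).
    by rewrite fa ?fb.
  have [/porbit_cycleP[g gx ->] | zNb] := boolP (z \in porbit x b).
    by rewrite fb ?fa.
  by rewrite !f_out.
have fx z : f (x z) = x (f z).
  have xg c (g : {perm T}) : x (g c) = (g * x) c by rewrite permM.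
  have gxx g : g \in <[x]> -> g * x \in <[x]> by move=> gx; rewrite groupM ?cycle_id.
  have [/porbit_cycleP[g gx ->] | zNa] := boolP (z \in porbit x a).
    by rewrite xg !fa ?gxx // permM.
  have [/porbit_cycleP[g gx ->] | zNb] := boolP (z \in porbit x b).
    by rewrite xg !fb ?gxx // permM.
  by rewrite !f_out ?mem_porbit_perm.
exists (perm (inv_inj f_inv)); split.
- by apply/permP=> z; rewrite !permM !permE fx.
- by rewrite permE -{1}[a]perm1 fa ?perm1.
- by rewrite permE -{1}[b]perm1 fb ?perm1.
apply/subsetP=> z; rewrite inE permE; apply: contraR.
by rewrite in_setU negb_or => /andP[zNa zNb]; rewrite f_out ?eqxx.
Qed.

End PrimeOrder.

Lemma order_swaps_porbits x a b s :
  b \notin porbit x a -> swaps_porbits x a b s -> #[s] = 2.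
Proof.
move=> bNa [cxs sa sb s_on]; apply: nt_prime_order => //; last first.
  by apply/eqP=> s1; move: bNa; rewrite -sa s1 perm1 porbit_id.
have s2a : (s ^+ 2) a = a by rewrite permX /= sa sb.
have s2b : (s ^+ 2) b = b by rewrite permX /= sb sa.
apply: (@perm_eq1_commute_porbits x); first exact: commuteX.
move=> z s2z; have : z \in porbit x a :|: porbit x b.
  by apply: (subsetP s_on); apply: contra s2z => /eqP/permX_fix ->.
by rewrite in_setU => /orP[]; [exists a | exists b].
Qed.

Lemma swaps_porbits_rotation x a b c s t :
    b \notin porbit x a -> c \notin porbit x a :|: porbit x b ->
    swaps_porbits x a b s -> swaps_porbits x b c t ->
  [/\ commute x (s * t), #[s * t] = 3 &
      perm_on (porbit x a :|: porbit x b :|: porbit x c) (s * t)].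
Proof.
move=> bNa cNab [cxs sa sb s_on] [cxt tb tc t_on].
move: cNab; rewrite in_setU negb_or => /andP[cNa cNb].
have sc : s c = c by apply: (out_perm s_on); rewrite in_setU negb_or cNa.
have ta : t a = a.
  by apply: (out_perm t_on); rewrite in_setU negb_or !(porbit_sym _ a) bNa.
have r_on : perm_on (porbit x a :|: porbit x b :|: porbit x c) (s * t).
  apply: perm_onM; [apply: subset_trans s_on _ | apply: subset_trans t_on _];
    by apply/subsetP=> z; rewrite !in_setU => /orP[] ->; rewrite ?orbT.
have r3 : forall z, z \in [:: a; b; c] -> ((s * t) ^+ 3) z = z.
  move=> z; rewrite !inE => /or3P[]/eqP->;
    by rewrite permX /= !permM ?(sa, sb, sc, ta, tb, tc).
split=> //; first exact: commuteM.
apply: nt_prime_order => //; last first.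
  by apply/eqP=> r1; move: cNa; rewrite -tb -sa -permM r1 perm1 porbit_id.
apply: (@perm_eq1_commute_porbits x); first exact/commuteX/commuteM.
move=> z r3z; have : z \in porbit x a :|: porbit x b :|: porbit x c.
  by apply: (subsetP r_on); apply: contra r3z => /eqP/permX_fix ->.
rewrite !in_setU => /orP[/orP[]|]; [exists a | exists b | exists c] => //;
  by rewrite r3 // !inE eqxx ?orbT.
Qed.

End PermutationOrbits.

Section ConnectedToTransposition.

Variables (T : finType) (i j : T).
Hypotheses (T_ge8 : 8 <= #|T|) (ij : i != j).
Let T_ge7 : 7 <= #|T| := ltnW T_ge8.
Implicit Types x : {perm T}.

Lemma qconn_tperm_involution x : #[x] = 2 -> qconn x (tperm i j).
Proof.
move=> ox; have x1 : x != 1 by rewrite -order_gt1 ox.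
have x_prime : prime #[x] by rewrite ox.
set M := [set k | x k != k]; have xM : perm_on M x := perm_on_moved x.
have [M_small | M_large] := leqP (#|M| + 3) #|T|.
  have /card_gt2P[e [f [g [[eM fM gM] [ef fg ge]]]]] : 2 < #|~: M|.
    by have := cardsC M; lia.
  rewrite !inE in eM fM gM.
  have oc : #[perm_cycle3 e f g] = 3 := order_cycle3 ef fg ge.
  apply: (@qconn_trans _ (perm_cycle3 e f g)).
    apply: qconn_coprime; rewrite -?order_gt1 ?ox ?oc //.
    apply: perm_onC xM (perm_on_cycle3 e f g) _.
    rewrite disjoint_sym disjoints_subset.
    by apply/subsetP=> k /[!inE] /orP[/orP[]|] /eqP->.
  apply: (@qconn_tperm_small_support _ [set e; f; g]); rewrite -?order_gt1 ?oc //.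
  - exact: perm_on_cycle3.
  - by rewrite !cardsU !cards1; lia.
have card_orbit k : #|porbit x k| <= 2 by rewrite -ox porbit.unlock leq_imset_card.
have [a] : exists a, a \notin ~: M by apply: exists_notin; have := cardsC M; lia.
have [b] : exists b, b \notin ~: M :|: porbit x a.
  by apply: exists_notin; have := cardsC M; have := card_orbit a; rewrite cardsU; lia.
have [c] : exists c, c \notin ~: M :|: porbit x a :|: porbit x b.
  apply: exists_notin; have := cardsC M; have := card_orbit a; have := card_orbit b.
  by rewrite !cardsU; lia.
rewrite !in_setU !inE !negb_or !negbK => /andP[/andP[cM cNa] cNb] /andP[bM bNa] aM.
have [s swap_ab] := swaps_porbits_exists x_prime aM bM bNa.
have [t swap_bc] := swaps_porbits_exists x_prime bM cM cNb.
have cNab : c \notin porbit x a :|: porbit x b by rewrite in_setU negb_or cNa.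
have [cxr or r_on] := swaps_porbits_rotation bNa cNab swap_ab swap_bc.
apply: (@qconn_trans _ (s * t)).
  by apply: qconn_coprime; rewrite -?order_gt1 ?ox ?or.
apply: (qconn_tperm_small_support _ _ _ _ r_on); rewrite -?order_gt1 ?or //.
have := card_orbit a; have := card_orbit b; have := card_orbit c; rewrite !cardsU; lia.
Qed.

Lemma qconn_tperm_prime x : prime #[x] -> #[x] + 2 <= #|T| -> qconn x (tperm i j).
Proof.
move=> x_prime x_small; have [ox2 | odd_x] := even_prime x_prime.
  exact: qconn_tperm_involution.
have x1 : x != 1 by rewrite -order_gt1 prime_gt1.
set M := [set k | x k != k].
have [M_small | M_large] := leqP (#|M| + 2) #|T|.
  exact: (qconn_tperm_small_support _ _ _ _ (perm_on_moved x)).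
have card_orbit k : #|porbit x k| <= #[x] by rewrite porbit.unlock leq_imset_card.
have [a] : exists a, a \notin ~: M by apply: exists_notin; have := cardsC M; lia.
have [b] : exists b, b \notin ~: M :|: porbit x a.
  by apply: exists_notin; have := cardsC M; have := card_orbit a; rewrite cardsU; lia.
rewrite !in_setU !inE !negb_or !negbK => /andP[bM bNa] aM.
have [s swap_ab] := swaps_porbits_exists x_prime aM bM bNa.
have os := order_swaps_porbits bNa swap_ab.
apply: (@qconn_trans _ s); last exact: qconn_tperm_involution.
apply: qconn_coprime => //; first by case: swap_ab.
  by rewrite os coprimen2.
by rewrite -order_gt1 os.
Qed.

End ConnectedToTransposition.

Lemma cent1_perm_prime (T : finType) (u : {perm T}) :
  prime #[u] -> #|T| <= #[u].+1 -> 'C[u] \subset <[u]>.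
Proof.
move=> u_prime T_small; apply/subsetP=> v /cent1P/commute_sym cuv.
have [a ua] : exists a, u a != a.
  apply/existsP; apply: contraTT (prime_gt1 u_prime) => /existsPn ufix.
  suff -> : u = 1 by rewrite order1.
  by apply/permP=> k; rewrite perm1; apply/eqP/negbNE/ufix.
have card_a := card_porbit_prime u_prime ua.
(* v permutes the orbits of u, and only one of them has #[u] elements. *)
have [/porbit_cycleP[g gu vag] | vaNa] := boolP (v a \in porbit u a).
  have cug : commute u g by case/cycleP: gu => k ->; exact: commuteX.
  have cuk : commute u (v * g^-1) by apply: commuteM => //; apply: commuteV.
  have ka : (v * g^-1) a = a by rewrite permM vag permK.
  suff /eqP : v * g^-1 = 1 by rewrite -eq_mulgV1 => /eqP ->.
  apply: (@perm_on_id _ _ (~: porbit u a)); last by have := cardsC (porbit u a); lia.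
  apply/subsetP=> z; rewrite inE in_setC; apply: contra => za.
  by rewrite (commute_fix_porbit cuk ka za).
have uva : u (v a) != v a.
  by rewrite -permM -cuv permM (inj_eq perm_inj).
have disj : porbit u a :&: porbit u (v a) = set0.
  apply/setP=> z; rewrite !inE; apply/negbTE/andP=> -[za zva]; case/negP: vaNa.
  by move: za zva; rewrite -!eq_porbit_mem => /eqP <- /eqP ->.
have := cardsUI (porbit u a) (porbit u (v a)).
rewrite disj cards0 card_a card_porbit_prime //.
by have := max_card (porbit u a :|: porbit u (v a)); have := prime_gt1 u_prime; lia.
Qed.

Unset Implicit Arguments.

Theorem proposition7p8 (n : nat) (hn : (8 <= n)%N) (a b : 'I_n)
    (ha : nat_of_ord a = 0%N) (hb : nat_of_ord b = 1%N) (psi : 'S_n) :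
  psi != 1 ->
  ~ (prime #[psi] /\ (n - 1 <= #[psi])%N) ->
  qconnected (qclass (tperm a b)) (qclass psi).
Proof.
move=> psi1 not_large_prime; apply: qconn_sym.
have ab : a != b by apply/eqP=> eab; move: ha hb; rewrite eab => ->.
have n8 : 8 <= #|'I_n| by rewrite card_ord.
have psi_gt1 : 1 < #[psi] by rewrite order_gt1.
set q := pdiv #[psi]; have q_prime : prime q := pdiv_prime psi_gt1.
have q_dvd : q %| #[psi] := pdiv_dvd _.
set u := psi ^+ (#[psi] %/ q).
have ou : #[u] = q by rewrite orderXdiv ?dvdn_div // divnA // mulKn.
have u1 : u != 1 by rewrite -order_gt1 ou prime_gt1.
have [q_small | q_large] := leqP (q + 2) n.
  by apply: qconn_trans (qconn_expg u1) _; apply: qconn_tperm_prime; rewrite ?ou ?card_ord.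
have psi_u : psi \in <[u]>.
  apply: subsetP (cent1_perm_prime _ _) _ _; rewrite ?ou ?card_ord //; first lia.
  by apply/cent1P/commuteX.
have opsi : #[psi] = q.
  by apply/(prime_nt_dvdP q_prime); rewrite ?order_eq1 // -ou order_dvdG.
by case: not_large_prime; rewrite opsi; split=> //; lia.
Qed.
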